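(* If a graph $G$ contains a strongly $1$-shallow $K_t$-minor, then $h_o(G)\geq t$.
   Context: A $K_t$-minor of a graph $G$ is given by $t$ pairwise vertex-disjoint connected subgraphs (bags) of $G$, any two of which are joined by an edge of $G$. A star is $K_{1,s}$ for some $s\ge1$. A $K_t$-minor is strongly $1$-shallow if each bag is either a single vertex or a star, and for every two bags there is a connecting edge of $G$ each of whose endpoints is either the unique vertex of a single-vertex bag or a leaf vertex of a star bag. A signed graph $(G,\sigma)$ is a graph with a map $\sigma:E(G)\to\{+,-\}$. Switching at a vertex $x$ changes the sign of every edge incident with $x$; this generates switching equivalence. $(H,\pi)$ is a minor of $(G,\sigma)$ if there exist a signature $\tau$ switching equivalent to $\sigma$ and pairwise vertex-disjoint subgraphs $B_x$ of $G$ ($x\in V(H)$) such that (i) the positive edges of each $B_x$ under $\tau$ form a connected spanning subgraph of $B_x$, and (ii) for each edge $xy$ of $H$ there is an edge $uv$ of $G$ with $u\in V(B_x)$, $v\in V(B_y)$ and $\tau(uv)=\pi(xy)$. $(G,-)$ denotes $G$ with all edges negative. The odd Hadwiger number $h_o(G)$ is the largest $t$ such that $(K_t,-)$ is a minor of $(G,-)$. *)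

(* Simple graphs are symmetric irreflexive relations on a finType. *)
From Stdlib Require Import Relations.
From mathcomp Require Import all_boot.
From mathcomp Require Import boolp.
Set Implicit Arguments. Unset Strict Implicit. Unset Printing Implicit Defensive.

Section Defs.
Variable T : finType.
Variable e : rel T.

(* Bag i is encoded by a vertex c i and a set L i of leaves.
   If L i = set0 the bag is the single vertex c i; otherwise it is the star
   with centre c i and leaf set L i (a star K_{1,s}, s = #|L i| >= 1). *)
Definition bag_vertices (c : T) (L : {set T}) : {set T} := c |: L.
Definition bag_ports (c : T) (L : {set T}) : {set T} :=
  if L == set0 then [set c] else L.

Definition strongly_1shallow_Kt_minor (t : nat) : Prop :=
  exists (c : 'I_t -> T) (L : 'I_t -> {set T}),
    [/\ (forall i, c i \notin L i),
        (forall i l, l \in L i -> e (c i) l),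
        (forall i j, i != j ->
            [disjoint bag_vertices (c i) (L i) & bag_vertices (c j) (L j)]) &
        (forall i j, i != j ->
            exists u v, [/\ u \in bag_ports (c i) (L i),
                            v \in bag_ports (c j) (L j) & e u v])].

(* A signature is a map T -> T -> bool, read on the edges of G;
   true = positive (+), false = negative (-). *)
Definition signature := T -> T -> bool.

Definition switch_at (x : T) (s : signature) : signature :=
  fun u v => if (u == x) (+) (v == x) then ~~ s u v else s u v.

Definition switch_step (s1 s2 : signature) : Prop := exists x, s2 = switch_at x s1.

Definition switching_equivalent (s1 s2 : signature) : Prop :=
  clos_refl_sym_trans signature switch_step s1 s2.

Definition all_neg : signature := fun _ _ => false.

(* (K_t, -) is a minor of (G, sigma): bags B_x = (S x, F x) are subgraphs of G
   (vertex set S x, edge relation F x with edges of G inside S x). *)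
Definition signed_Kt_neg_minor (sigma : signature) (t : nat) : Prop :=
  exists (tau : signature) (S : 'I_t -> {set T}) (F : 'I_t -> rel T),
    [/\ switching_equivalent sigma tau,
        (forall x u v, F x u v -> [/\ e u v, u \in S x & v \in S x]),
        (forall x y, x != y -> [disjoint S x & S y]),
        (forall x, S x != set0 /\
            forall u v, u \in S x -> v \in S x ->
              connect (fun a b => F x a b && tau a b) u v) &
        (* every edge xy of K_t (negative in (K_t,-)) is realised *)
        (forall x y, x != y ->
            exists u v, [/\ u \in S x, v \in S y, e u v & tau u v = false])].

(* odd Hadwiger number: largest t with (K_t,-) a minor of (G,-)
   (bags are nonempty and disjoint, so t <= #|T|). *)
Definition odd_hadwiger : nat :=
  \max_(k < #|T|.+1 | `[< signed_Kt_neg_minor all_neg k >]) k.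

End Defs.

From mathcomp Require Import all_boot.
From mathcomp Require Import boolp.
From Stdlib Require Import Relation_Operators.

Set Implicit Arguments. Unset Strict Implicit. Unset Printing Implicit Defensive.

(* Switch at the centres of all star bags.  A centre-leaf edge then has
   exactly one switched endpoint, so it becomes positive and every star bag
   is connected by positive edges; ports are never switched, so the edges
   joining ports of different bags stay negative. *)

Section Switching.
Variable T : finType.

Lemma switch_atE (x : T) (s : signature T) u v :
  switch_at x s u v = s u v (+) (u == x) (+) (v == x).
Proof. by rewrite /switch_at -addbA; case: (_ (+) _); rewrite ?addbT ?addbF. Qed.

Definition switch_on (X : {set T}) (s : signature T) : signature T :=
  foldr (@switch_at T) s (enum X).

Lemma switch_onE (X : {set T}) (s : signature T) u v :
  switch_on X s u v = s u v (+) (u \in X) (+) (v \in X).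
Proof.
rewrite /switch_on -(mem_enum (mem X) u) -(mem_enum (mem X) v).
elim: (enum X) (enum_uniq (mem X)) => [|x xs IH] /=; first by rewrite !addbF.
case/andP=> x_notin /IH {}IH; rewrite switch_atE IH !in_cons.
have orE w : (w == x) || (w \in xs) = (w == x) (+) (w \in xs).
  by case: eqP => [->|]; rewrite ?(negPf x_notin).
rewrite !orE.
by case: (s u v) (u == x) (v == x) (u \in xs) (v \in xs) => [] [] [] [] [].
Qed.

Lemma switching_equivalent_switch_on (X : {set T}) (s : signature T) :
  switching_equivalent s (switch_on X s).
Proof.
rewrite /switch_on; elim: (enum X) => [|x xs IH] /=; first exact: rst_refl.
apply: rst_trans IH _; apply: rst_step; by exists x.
Qed.

End Switching.

Lemma connect_star (T : finType) (r : rel T) (c : T) (L : {set T}) :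
  (forall l, l \in L -> r c l && r l c) -> {in c |: L &, forall u v, connect r u v}.
Proof.
move=> rcL u v; rewrite !in_setU1.
have to_c w : (w == c) || (w \in L) -> connect r w c.
  by case/orP=> [/eqP->|/rcL/andP[_ rwc]] //; apply: connect1.
have from_c w : (w == c) || (w \in L) -> connect r c w.
  by case/orP=> [/eqP->|/rcL/andP[rcw _]] //; apply: connect1.
by move=> /to_c ruc /from_c rcv; apply: connect_trans ruc rcv.
Qed.

Lemma leq_odd_hadwiger (T : finType) (e : rel T) (t : nat) :
  signed_Kt_neg_minor e (@all_neg T) t -> t <= odd_hadwiger e.
Proof.
move=> minor; have [? [S [? [_ _ disjS nonempty _]]]] := minor.
have /fin_all_exists [f fS] : forall x, exists v, v \in S x.
  by move=> x; have [/set0Pn] := nonempty x.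
have f_inj : injective f.
  move=> x y fxy; apply/eqP/negPn/negP=> /disjS/disjointFr/(_ (fS x)).
  by rewrite fxy fS.
have t_lt : t < #|T|.+1 by rewrite ltnS -{1}(card_ord t) -(card_imset _ f_inj) max_card.
apply: (@leq_bigmax_cond _ _ (fun k : 'I_#|T|.+1 => nat_of_ord k) (Ordinal t_lt)).
exact/asboolT.
Qed.

Section StronglyShallowMinor.
Variables (T : finType) (e : rel T) (t : nat).
Variables (c : 'I_t -> T) (L : 'I_t -> {set T}).
Hypothesis e_sym : symmetric e.
Hypothesis centre_notin_leaves : forall i, c i \notin L i.
Hypothesis centre_leaf_edge : forall i l, l \in L i -> e (c i) l.
Hypothesis disjoint_bags : forall i j, i != j ->
  [disjoint bag_vertices (c i) (L i) & bag_vertices (c j) (L j)].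

Local Notation B i := (bag_vertices (c i) (L i)).
Local Notation P i := (bag_ports (c i) (L i)).

Lemma centre_in_bag i : c i \in B i.
Proof. exact: setU11. Qed.

Lemma leaf_in_bag i l : l \in L i -> l \in B i.
Proof. exact: setU1r. Qed.

Lemma port_in_bag i p : p \in P i -> p \in B i.
Proof.
rewrite /bag_ports; case: eqP => _; last exact: leaf_in_bag.
by rewrite in_set1 => /eqP->; apply: centre_in_bag.
Qed.

Lemma bags_meet_eq i j x : x \in B i -> x \in B j -> i = j.
Proof.
move=> xi xj; apply/eqP/negPn/negP=> /disjoint_bags/disjointFr/(_ xi).
by rewrite xj.
Qed.

Definition star_centres : {set T} := [set c i | i in [pred i | L i != set0]].

Lemma centre_in_star_centres i : L i != set0 -> c i \in star_centres.
Proof. by move=> Li; apply: imset_f. Qed.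

Lemma leaf_notin_star_centres i l : l \in L i -> l \notin star_centres.
Proof.
move=> li; apply/negP=> /imsetP[j _ lj].
have eij : i = j by apply: (bags_meet_eq (leaf_in_bag li)); rewrite lj centre_in_bag.
by move: li; rewrite lj -eij (negPf (centre_notin_leaves i)).
Qed.

Lemma port_notin_star_centres i p : p \in P i -> p \notin star_centres.
Proof.
rewrite /bag_ports; case: eqP => [Li0|_]; last exact: leaf_notin_star_centres.
rewrite in_set1 => /eqP->; apply/negP=> /imsetP[j Lj cij].
have eij : i = j by apply: (bags_meet_eq (centre_in_bag i)); rewrite cij centre_in_bag.
by move: Lj; rewrite inE -eij Li0 eqxx.
Qed.

Definition star_edge i : rel T :=
  fun u v => (u == c i) && (v \in L i) || (v == c i) && (u \in L i).

Let tau := switch_on star_centres (@all_neg T).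

Lemma star_edge_positive i l : l \in L i -> tau (c i) l && tau l (c i).
Proof.
move=> li; have Li : L i != set0 by apply/set0Pn; exists l.
rewrite /tau !switch_onE centre_in_star_centres //.
by rewrite (negPf (leaf_notin_star_centres li)).
Qed.

Hypothesis ports_adjacent : forall i j, i != j ->
  exists u v, [/\ u \in P i, v \in P j & e u v].

Lemma star_bags_signed_minor : signed_Kt_neg_minor e (@all_neg T) t.
Proof.
exists tau, (fun i => B i), star_edge; split.
- exact: switching_equivalent_switch_on.
- move=> i u v /orP[|] /andP[/eqP-> li]; rewrite centre_in_bag leaf_in_bag //.
    by split=> //; apply: centre_leaf_edge.
  by split=> //; rewrite e_sym; apply: centre_leaf_edge.
- exact: disjoint_bags.
- move=> i; split; first by apply/set0Pn; exists (c i); apply: centre_in_bag.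
  move=> u v; apply: connect_star => l li.
  have /andP[pos_cl pos_lc] := star_edge_positive li.
  by rewrite pos_cl pos_lc /star_edge !eqxx li orbT.
- move=> i j /ports_adjacent[u [v [pu pv euv]]]; exists u, v.
  rewrite !port_in_bag // /tau switch_onE.
  by rewrite (negPf (port_notin_star_centres pu)) (negPf (port_notin_star_centres pv)).
Qed.

End StronglyShallowMinor.

Theorem lemma2p1 (T : finType) (e : rel T)
  (e_sym : symmetric e) (e_irr : irreflexive e) (t : nat) :
  strongly_1shallow_Kt_minor e t -> t <= odd_hadwiger e.
Proof.
case=> c [L [centre_notin_leaves centre_leaf_edge disjoint_bags ports_adjacent]].
exact/leq_odd_hadwiger/(star_bags_signed_minor e_sym).
Qed.
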